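(* Let $C_\infty=(\mathbb{N},+)$. Let $\mathcal{R}$ be the commutative DGA-algebra over $\mathbb{H}C_\infty$ with $\mathcal{R}_0$ free on $\{v_0\}$ ($\pi v_0=0$), $\mathcal{R}_1$ free on $\{w_0\}$ ($\pi w_0=1$), $\mathcal{R}_n=0$ for $n\ge2$, zero differential, augmentation the canonical isomorphism $\mathcal{R}_0\cong\mathbb{Z}$, and multiplication $v_0\circ v_0=v_0$, $v_0\circ w_0=w_0$, $w_0\circ w_0=0$. Then there are morphisms of DGA-algebras over $\mathbb{H}C_\infty$, $f:\mathbf{B}(\mathcal{Z}C_\infty)\to\mathcal{R}$ and $g:\mathcal{R}\to\mathbf{B}(\mathcal{Z}C_\infty)$, determined by $f[\,]=v_0$, $f[x]=x\,\big((x-1)_*w_0\big)$ (for $x\ge1$), $g v_0=[\,]$, $g w_0=[1]$, and they form a contraction: $fg=\mathrm{id}_{\mathcal{R}}$ and there is a chain homotopy $\Phi$ from $gf$ to $\mathrm{id}_{\mathbf{B}(\mathcal{Z}C_\infty)}$ (a morphism of $\mathbb{H}C_\infty$-modules of degree $+1$ with $\partial\Phi+\Phi\partial=gf-\mathrm{id}$, up to the sign convention) satisfying $\Phi g=0$, $f\Phi=0$, $\Phi\Phi=0$.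
   Context: For a commutative monoid $M$ (here $C_\infty$, written additively with identity $0$; read $xy$ as $x+y$), $\mathbb{H}M$ has objects the elements of $M$ and morphisms $(x,y):x\to xy$; an $\mathbb{H}M$-module is a functor $\mathbb{H}M\to\mathbf{Ab}$, i.e. groups $\mathcal{A}(x)$ with $y_*:\mathcal{A}(x)\to\mathcal{A}(xy)$, $y_*z_*=(yz)_*$, $e_*=\mathrm{id}$. A free $\mathbb{H}M$-module on a set $S$ with $\pi:S\to M$ has $(\cdot)(x)$ free abelian on $\{(u,s):u\,\pi(s)=x\}$, $y_*(u,s)=(uy,s)$, $s=(e,s)$. Chain complexes of $\mathbb{H}M$-modules form a symmetric monoidal category (tensor product $(\mathcal{A}\otimes\mathcal{B})(x)=\bigoplus_{zt=x}\mathcal{A}(z)\otimes\mathcal{B}(t)/(u_*a\otimes b=a\otimes u_*b)$, Koszul signs, unit the constant module $\mathbb{Z}$); a commutative DGA-algebra over $\mathbb{H}M$ is a commutative monoid there with an augmentation morphism of monoids to $\mathbb{Z}$. $\mathbf{B}(\mathcal{Z}M)$ is the (commutative DGA-) bar construction of $\mathcal{Z}M$: in degree $0$ it is free on $[\,]$ (with $\pi[\,]=e$), and for $n\ge1$ it is the free $\mathbb{H}M$-module on the cells $[x_1|\cdots|x_n]$, $x_i\in M$, $\pi[x_1|\cdots|x_n]=x_1\cdots x_n$, with $[x_1|\cdots|x_n]=0$ if some $x_i=e$; differential $\partial[x_1|\cdots|x_n]=x_{1*}[x_2|\cdots|x_n]+\sum_{i=1}^{n-1}(-1)^i[x_1|\cdots|x_ix_{i+1}|\cdots|x_n]+(-1)^nx_{n*}[x_1|\cdots|x_{n-1}]$;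 multiplication the shuffle product $[x_1|\cdots|x_n]\circ[x_{n+1}|\cdots|x_{n+m}]=\sum_\sigma\mathrm{sgn}(\sigma)[x_{\sigma^{-1}(1)}|\cdots|x_{\sigma^{-1}(n+m)}]$ over $(n,m)$-shuffles; unit $[\,]$; augmentation $\mathbf{B}_0\cong\mathbb{Z}$. Morphisms of DGA-algebras preserve differential, multiplication, unit and augmentation; morphisms from a free module are determined by values on generators. *)

From HB Require Import structures.
From mathcomp Require Import all_boot all_order all_algebra.
Set Implicit Arguments. Unset Strict Implicit. Unset Printing Implicit Defensive.
Import GRing.Theory.
Local Open Scope ring_scope.

(* H C_oo for C_oo = (nat,+): objects are naturals, and the morphisms       *)
(* x -> x + y are in bijection with proofs of x <= x' (x' = x + y,          *)
(* y = x' - x).  An H C_oo-module is thus given by groups A(x) and maps     *)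
(* A(x) -> A(x') for x <= x'.  A graded object (chain complex) has groups    *)
(* obj n x in degree n at object x.                                         *)
(*   ddif : differential, degree n+1 -> n (zero out of degree 0)            *)
(*   dmul : multiplication A⊗A -> A, given as the family of bilinear maps   *)
(*          A_n(z) x A_m(t) -> A_{n+m}(z+t)                                 *)
(*   dunit: unit, an element of A_0(e) = A_0(0)                             *)
Record dga := DGA {
  dobj : nat -> nat -> zmodType;
  dact : forall n x x', (x <= x')%N -> dobj n x -> dobj n x';
  ddif : forall n x, dobj n.+1 x -> dobj n x;
  dmul : forall n m z t, dobj n z -> dobj m t -> dobj (n + m) (z + t);
  dunit : dobj 0 0;
  daug : forall x, dobj 0 x -> int }.

Arguments dact {d n x x'}.
Arguments ddif {d n x}.
Arguments dmul {d n m z t}.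
Arguments daug {d x}.

Definition is_hmod_morph (A B : dga) (f : forall n x, dobj A n x -> dobj B n x) :=
  (forall n x, {morph f n x : a b / a + b}) /\
  (forall n x x' (h : (x <= x')%N) a, f n x' (dact h a) = dact h (f n x a)).

Definition is_hmod_morph1 (A B : dga) (f : forall n x, dobj A n x -> dobj B n.+1 x) :=
  (forall n x, {morph f n x : a b / a + b}) /\
  (forall n x x' (h : (x <= x')%N) a, f n x' (dact h a) = dact h (f n x a)).

Definition is_dga_morph (A B : dga) (f : forall n x, dobj A n x -> dobj B n x) :=
  is_hmod_morph f /\
  (forall n x (a : dobj A n.+1 x), f n x (ddif a) = ddif (f n.+1 x a)) /\
  (forall n m z t (a : dobj A n z) (b : dobj A m t),
      f (n + m)%N (z + t)%N (dmul a b) = dmul (f n z a) (f m t b)) /\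
  f 0%N 0%N (dunit A) = dunit B /\
  (forall x (a : dobj A 0 x), daug (f 0%N x a) = daug a).

(* B_n(x) is free abelian on the generators (u,[x1|...|xn]) with            *)
(* u + x1 + ... + xn = x, all xi >= 1 (cells with some xi = e are 0).       *)
(* At a fixed object x such a generator is determined by the sequence       *)
(* [x1;...;xn] (with sum <= x), so B_n(x) = functions (finite support)       *)
(* from the finite set of such sequences to Z; y_* keeps the sequence.      *)
Definition Bcell (n x : nat) :=
  {t : n.-tuple 'I_x.+1 |
     all (fun i : 'I_x.+1 => (0 < i)%N) t && (\sum_(i <- t) (i : nat) <= x)%N}.

Definition cellseq n x (c : Bcell n x) : seq nat := map (@nat_of_ord x.+1) (val c).

Definition Bobj (n x : nat) : zmodType := {ffun Bcell n x -> int}.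

(* the basis element of B_n(x) given by the sequence s (i.e. the generator
   u_*[s] with u = x - sum s); it is 0 if s is not a valid cell *)
Definition bas (n x : nat) (s : seq nat) : Bobj n x :=
  [ffun c => if cellseq c == s then 1 else 0].

Definition Bact n x x' (h : (x <= x')%N) (a : Bobj n x) : Bobj n x' :=
  \sum_(c : Bcell n x) bas n x' (cellseq c) *~ a c.

(* merge entries i and i+1 (0-indexed) *)
Definition merge_at (i : nat) (s : seq nat) : seq nat :=
  take i s ++ (nth 0 s i + nth 0 s i.+1)%N :: drop i.+2 s.

Definition dcell (n x : nat) (s : seq nat) : Bobj n x :=
  bas n x (behead s)
  + \sum_(i < n) bas n x (merge_at i s) *~ ((-1) ^+ i.+1)
  + bas n x (take n s) *~ ((-1) ^+ n.+1).

Definition Bdif n x (a : Bobj n.+1 x) : Bobj n x :=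
  \sum_(c : Bcell n.+1 x) dcell n x (cellseq c) *~ a c.

(* signed (p,q)-shuffles of two sequences: pairs (sgn sigma, shuffled seq) *)
Fixpoint shuf (s t : seq nat) : seq (int * seq nat) :=
  match s with
  | [::] => [:: (1, t)]
  | x :: s' =>
      let fix sh2 (t : seq nat) : seq (int * seq nat) :=
        match t with
        | [::] => [:: (1, x :: s')]
        | y :: t' =>
            [seq (p.1, x :: p.2) | p <- shuf s' (y :: t')] ++
            [seq ((-1) ^+ (size (x :: s')) * p.1, y :: p.2) | p <- sh2 t']
        end in sh2 t
  end.

Definition shprod (N X : nat) (s t : seq nat) : Bobj N X :=
  \sum_(p <- shuf s t) bas N X p.2 *~ p.1.

Definition Bmul n m z t (a : Bobj n z) (b : Bobj m t) : Bobj (n + m) (z + t) :=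
  \sum_(c : Bcell n z) \sum_(d : Bcell m t)
     shprod (n + m) (z + t) (cellseq c) (cellseq d) *~ (a c * b d).

Definition Baug x (a : Bobj 0 x) : int := \sum_(c : Bcell 0 x) a c.

Definition Bdga : dga :=
  @DGA Bobj Bact Bdif Bmul (bas 0 0 [::]) Baug.

(* R_n = 0 for n >= 2.  The generators of R_n(x) are (u,v0) with u = x      *)
(* (n = 0) and (u,w0) with u + 1 = x (n = 1, needs 0 < x): at most one.     *)
Definition Rcell (n x : nat) := {i : 'I_1 | (n == 0%N) || ((n == 1%N) && (0 < x)%N)}.

Definition Robj (n x : nat) : zmodType := {ffun Rcell n x -> int}.

(* the generator of R_n(x) (0 if there is none) *)
Definition Rgen (n x : nat) : Robj n x := [ffun _ => 1].

Definition Rsum n x (a : Robj n x) : int := \sum_(c : Rcell n x) a c.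

Definition Ract n x x' (h : (x <= x')%N) (a : Robj n x) : Robj n x' :=
  Rgen n x' *~ Rsum a.

Definition Rdif n x (a : Robj n.+1 x) : Robj n x := 0.

(* v0 o v0 = v0, v0 o w0 = w0 (= w0 o v0), w0 o w0 = 0, extended naturally *)
Definition Rmul n m z t (a : Robj n z) (b : Robj m t) : Robj (n + m) (z + t) :=
  Rgen (n + m) (z + t) *~ (Rsum a * Rsum b).

Definition Raug x (a : Robj 0 x) : int := Rsum a.

Definition Rdga : dga := @DGA Robj Ract Rdif Rmul (Rgen 0 0) Raug.

Definition v0 : dobj Rdga 0 0 := Rgen 0 0.
Definition w0 : dobj Rdga 1 1 := Rgen 1 1.

From HB Require Import structures.
From mathcomp Require Import all_boot all_order all_algebra zify ring.
Set Implicit Arguments. Unset Strict Implicit. Unset Printing Implicit Defensive.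
Import GRing.Theory.
Local Open Scope ring_scope.

(* Every map is the additive extension of its values on cells, so every identity is
   checked cell by cell. f is (sum s) w0 on a 1-cell s and 0 in degrees >= 2, where R
   vanishes; it commutes with d because f d[a|b] = (b - (a + b) + a) w0 = 0, and with
   products because [1] o [1] = [1|1] - [1|1] = 0 matches w0 o w0 = 0. The homotopy is
     Phi[s1|s2|...|sn] = sum_(1 <= j < s1) [1|j|s2|...|sn].
   Every cell in the image of g or Phi starts with 1, hence Phi g = 0 and Phi Phi = 0.
   For d Phi + Phi d = g f - id expand d[a|t] = [t] - [a + t1|t'] + [a|t'] - [a|d t]:
   on a 1-cell [k] the terms d[1|j] = [j] - [j+1] + [1] telescope to k[1] - [k]; on
   longer cells the terms telescope in the first entry, the sums produced by Phi d
   cancel those of d Phi after reindexing j |-> j + s2, and the [1|j|d t] terms cancel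
   in pairs, leaving -[s]. *)

Definition is_cell n x (s : seq nat) : bool :=
  [&& size s == n, all (fun i => 0 < i)%N s & (sumn s <= x)%N].

Lemma Bcell_predE n x (t : n.-tuple 'I_x.+1) :
  all (fun i : 'I_x.+1 => (0 < i)%N) t && (\sum_(i <- t) (i : nat) <= x)%N
  = is_cell n x (map (@nat_of_ord x.+1) t).
Proof. by rewrite /is_cell size_map size_tuple eqxx all_map sumnE big_map. Qed.

Lemma cellseqP n x (c : Bcell n x) : is_cell n x (cellseq c).
Proof. by case: c => t; rewrite /cellseq /= Bcell_predE. Qed.

Lemma cellseq_inj n x : injective (@cellseq n x).
Proof. by move=> c1 c2 /(inj_map (@ord_inj _)) /val_inj; apply: val_inj. Qed.

Lemma cellseq_onto n x s : is_cell n x s -> exists c : Bcell n x, cellseq c = s.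
Proof.
move=> s_cell; have /and3P[/eqP size_s _ sum_s] := s_cell.
have inordK_s : map (@nat_of_ord x.+1) (map inord s) = s.
  elim: s {size_s s_cell} sum_s => //= a s IH sum_as.
  by rewrite inordK ?IH //; lia.
have size_t : size (map (@inord x) s) == n by rewrite size_map size_s.
have t_cell : all (fun i : 'I_x.+1 => (0 < i)%N) (Tuple size_t)
              && (\sum_(i <- Tuple size_t) (i : nat) <= x)%N.
  by rewrite Bcell_predE /= inordK_s.
by exists (exist _ (Tuple size_t) t_cell); rewrite /cellseq /= inordK_s.
Qed.

Lemma basE n x s (c : Bcell n x) : bas n x s c = (cellseq c == s)%:Z.
Proof. by rewrite /bas ffunE; case: eqP. Qed.

Lemma bas_eq0 n x s : ~~ is_cell n x s -> bas n x s = 0.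
Proof.
move=> s_not_cell; apply/ffunP=> c; rewrite basE ffunE.
by case: eqP => // cs; move: s_not_cell; rewrite -cs cellseqP.
Qed.

Lemma is_cell_mono n x x' s : (x <= x')%N -> is_cell n x s -> is_cell n x' s.
Proof. by rewrite /is_cell => le_xx' /and3P[-> -> sum_s] /=; lia. Qed.

Lemma is_cell_cons n x a t :
  is_cell n.+1 x (a :: t) = [&& (0 < a)%N, is_cell n (x - a) t & (a <= x)%N].
Proof.
rewrite /is_cell /= eqSS.
case: (size t == n) => //=; case: (0 < a)%N => //=; case: (all _ t) => //=.
by apply/idP/idP; lia.
Qed.

Lemma sumn_merge_at i s : sumn (merge_at i s) = sumn s.
Proof.
have sumn_drop j (y : seq nat) : sumn (drop j y) = (nth 0 y j + sumn (drop j.+1 y))%N.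
  by elim: y j => [|b y IH] [|j] //=; rewrite ?drop0 ?IH.
rewrite /merge_at sumn_cat /= -[in RHS](cat_take_drop i s) sumn_cat.
by rewrite (sumn_drop i) (sumn_drop i.+1) !addnA.
Qed.

Lemma sumn_take_le k s : (sumn (take k s) <= sumn s)%N.
Proof. by rewrite -{2}(cat_take_drop k s) sumn_cat leq_addr. Qed.

Lemma sumn_behead_le s : (sumn (behead s) <= sumn s)%N.
Proof. by case: s => //= a s; rewrite leq_addl. Qed.

(** * Additive extension from cells *)

Definition extend (V : zmodType) n x (F : seq nat -> V) (a : Bobj n x) : V :=
  \sum_(c : Bcell n x) F (cellseq c) *~ a c.

Lemma extend_is_zmod_morphism (V : zmodType) n x (F : seq nat -> V) :
  zmod_morphism (@extend V n x F).
Proof.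
by move=> a b; rewrite /extend -sumrB; apply: eq_bigr => c _; rewrite !ffunE mulrzBr.
Qed.

HB.instance Definition _ (V : zmodType) n x (F : seq nat -> V) :=
  GRing.isZmodMorphism.Build _ _ (@extend V n x F) (extend_is_zmod_morphism F).

Lemma extend_morph (V W : zmodType) n x (h : V -> W) (F : seq nat -> V) (a : Bobj n x) :
  {morph h : u v / u + v} -> h (extend F a) = extend (fun s => h (F s)) a.
Proof.
move=> hD; have h0 : h 0 = 0 by apply: (addrI (h 0)); rewrite -hD !addr0.
pose hA : {additive V -> W} := HB.pack h (GRing.isNmodMorphism.Build _ _ h (h0, hD)).
by rewrite -[h]/(hA : V -> W) raddf_sum; apply: eq_bigr => c _; rewrite raddfMz.
Qed.

Section Extend.
Variables (V : zmodType) (n x : nat).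
Implicit Types (F G : seq nat -> V) (a : Bobj n x).

Lemma extend_bas F s : extend F (bas n x s) = if is_cell n x s then F s else 0.
Proof.
case: ifP => [s_cell | /negbT s_not_cell]; last by rewrite bas_eq0 // raddf0.
have [c cs] := cellseq_onto s_cell.
rewrite /extend (bigD1 c) //= big1 ?addr0 => [|d d_c]; first by rewrite basE cs eqxx.
by rewrite basE -cs (inj_eq (@cellseq_inj n x)) (negbTE d_c) mulr0z.
Qed.

Lemma extend_basE F s : (forall t, ~~ is_cell n x t -> F t = 0) ->
  extend F (bas n x s) = F s.
Proof. by move=> F0; rewrite extend_bas; case: ifP => // /negbT /F0 ->. Qed.

Lemma eq_extend F G a : (forall s, is_cell n x s -> F s = G s) ->
  extend F a = extend G a.
Proof. by move=> FG; apply: eq_bigr => c _; rewrite FG ?cellseqP. Qed.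

Lemma extend0l a : extend (fun _ => 0 : V) a = 0.
Proof. by rewrite /extend big1 // => c _; rewrite mul0rz. Qed.

Lemma extendDl F G a : extend (fun s => F s + G s) a = extend F a + extend G a.
Proof. by rewrite /extend -big_split; apply: eq_bigr => c _; rewrite mulrzDl. Qed.

Lemma extendBl F G a : extend (fun s => F s - G s) a = extend F a - extend G a.
Proof. by rewrite extendDl (extend_morph _ _ (@opprD V)). Qed.

Lemma extend_suml I (r : seq I) (F : I -> seq nat -> V) a :
  extend (fun s => \sum_(i <- r) F i s) a = \sum_(i <- r) extend (F i) a.
Proof.
rewrite /extend -exchange_big; apply: eq_bigr => c _.
by rewrite mulrz_suml.
Qed.

Lemma extend_basK a : extend (bas n x) a = a.
Proof.
apply/ffunP=> d; rewrite /extend sum_ffunE (bigD1 d) //= big1 ?addr0 => [|c c_d].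
  by rewrite ffunMzE basE eqxx mulrzz mul1r.
by rewrite ffunMzE basE (inj_eq (@cellseq_inj n x)) eq_sym (negbTE c_d) mul0rz.
Qed.

End Extend.

Arguments extend0l {V n x}.

(** * The algebra R *)

Definition Rnonzero n x := (n == 0)%N || ((n == 1)%N && (0 < x)%N).

Lemma Robj_trivial n x (r r' : Robj n x) : ~~ Rnonzero n x -> r = r'.
Proof. by move=> /negP R0; apply/ffunP=> -[i Ri]; case: R0. Qed.

Lemma Rsum_cell n x (c : Rcell n x) (r : Robj n x) : Rsum r = r c.
Proof.
rewrite /Rsum (bigD1 c) //= big1 ?addr0 // => d /negP[].
by apply/eqP/val_inj; rewrite /= !ord1.
Qed.

Lemma Rsum_eq0 n x (r : Robj n x) : ~~ Rnonzero n x -> Rsum r = 0.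
Proof. by move=> /negP R0; rewrite /Rsum big1 // => -[i Ri]; case: R0. Qed.

Lemma Rsum_is_zmod_morphism n x : zmod_morphism (@Rsum n x).
Proof. by move=> r r'; rewrite /Rsum -sumrB; apply: eq_bigr => c _; rewrite !ffunE. Qed.

HB.instance Definition _ n x :=
  GRing.isZmodMorphism.Build _ _ (@Rsum n x) (@Rsum_is_zmod_morphism n x).

Lemma Rsum_genMz n x k : Rnonzero n x -> Rsum (Rgen n x *~ k) = k.
Proof. by move=> Rx; rewrite (Rsum_cell (exist _ ord0 Rx)) ffunMzE ffunE mulrzz mul1r. Qed.

Lemma Rsum_gen n x : Rnonzero n x -> Rsum (Rgen n x) = 1.
Proof. by move=> Rx; rewrite -[Rgen n x]mulr1z Rsum_genMz. Qed.

Lemma Rgen_Rsum n x (r : Robj n x) : Rgen n x *~ Rsum r = r.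
Proof. by apply/ffunP=> c; rewrite ffunMzE ffunE (Rsum_cell c) mulrzz mul1r. Qed.

Lemma Rnonzero_mono n x x' : (x <= x')%N -> Rnonzero n x -> Rnonzero n x'.
Proof.
rewrite /Rnonzero => le_xx' /orP[->//|/andP[-> x0]].
by rewrite (leq_trans x0 le_xx') orbT.
Qed.

Lemma is_cell_Rnonzero n x x' s : is_cell n x s -> Rnonzero n x' -> Rnonzero n x.
Proof.
rewrite /Rnonzero /is_cell => /and3P[/eqP <- s_pos sum_s] /orP[->//|/andP[/eqP s1 _]].
by case: s s1 s_pos sum_s => [|k []] //= _ /andP[k0 _]; lia.
Qed.

Lemma is_cell_ones n x : Rnonzero n x -> is_cell n x (nseq n 1%N).
Proof. by rewrite /Rnonzero => /orP[/eqP->//|/andP[/eqP-> x0]]; rewrite /is_cell /=; lia. Qed.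

Lemma Ract_is_zmod_morphism n x x' (le_xx' : (x <= x')%N) :
  zmod_morphism (@Ract n x x' le_xx').
Proof. by move=> r r'; rewrite /Ract raddfB mulrzBr. Qed.

HB.instance Definition _ n x x' (le_xx' : (x <= x')%N) :=
  GRing.isZmodMorphism.Build _ _ (@Ract n x x' le_xx') (Ract_is_zmod_morphism le_xx').

Lemma RmulDl n m z t (r r' : Robj n z) (q : Robj m t) :
  Rmul (r + r') q = Rmul r q + Rmul r' q.
Proof. by rewrite /Rmul raddfD mulrDl mulrzDr. Qed.

Lemma RmulDr n m z t (r : Robj n z) (q q' : Robj m t) :
  Rmul r (q + q') = Rmul r q + Rmul r q'.
Proof. by rewrite /Rmul raddfD mulrDr mulrzDr. Qed.

HB.instance Definition _ n x :=
  GRing.Additive.copy (@Bdif n x) (extend (dcell n x)).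

Definition bar_cons (a n x : nat) : Bobj n x -> Bobj n.+1 x :=
  extend (fun t => bas n.+1 x (a :: t)).

HB.instance Definition _ a n x :=
  GRing.Additive.copy (@bar_cons a n x) (extend (fun t => bas n.+1 x (a :: t))).

Lemma bar_cons_bas a n x t : bar_cons a (bas n x t) = bas n.+1 x (a :: t).
Proof.
rewrite /bar_cons extend_bas; case: ifP => // /negbT t_not_cell; rewrite bas_eq0 //.
apply: contra t_not_cell; rewrite is_cell_cons => /and3P[_ t_cell _].
by apply: is_cell_mono t_cell; rewrite leq_subr.
Qed.

Lemma dcell0 x k : dcell 0 x [:: k] = 0.
Proof. by rewrite /dcell big_ord0 addr0 expr1 mulrN1z subrr. Qed.

Lemma dcell_cons n x a y :
  dcell n.+1 x (a :: y) = bas n.+1 x y - bas n.+1 x ((a + head 0 y)%N :: behead y)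
    + bas n.+1 x (a :: behead y) - bar_cons a (dcell n x y).
Proof.
rewrite [dcell n x y]/dcell !(raddfD (@bar_cons a n x)) !(raddfMz (@bar_cons a n x)).
rewrite (raddf_sum (@bar_cons a n x)) /= !bar_cons_bas.
under [in RHS]eq_bigr do rewrite raddfMz /= bar_cons_bas.
rewrite /dcell big_ord_recl /=.
have -> : merge_at 0 (a :: y) = (a + head 0 y)%N :: behead y.
  by case: y => [|b y] //=; rewrite /merge_at /= drop0.
set G := fun i : 'I_n => bas n.+1 x (a :: merge_at i y).
rewrite (eq_bigr (fun i => G i *~ (-1) ^+ i.+2)) //.
rewrite (eq_bigr (fun i => - (G i *~ (-1) ^+ i.+1))); last first.
  by move=> i _; rewrite exprS mulN1r mulrNz.
by rewrite sumrN (exprS _ n.+1) mulN1r !mulrNz mulr1z !opprD !addrA addrK.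
Qed.

Lemma shprod_nil_l N X u : shprod N X [::] u = bas N X u.
Proof. by rewrite /shprod big_seq1 mulr1z. Qed.

Lemma shprod_nil_r N X s : shprod N X s [::] = bas N X s.
Proof. by case: s => [|a s]; rewrite /shprod big_seq1 mulr1z. Qed.

Lemma shprod11 N X : shprod N X [:: 1%N] [:: 1%N] = 0.
Proof. by rewrite /shprod /= !big_cons big_nil addr0 mulr1 expr1 mulrN1z mulr1z subrr. Qed.

Lemma Bmul_extend n m z t (a : Bobj n z) (b : Bobj m t) :
  Bmul a b = extend (fun s => extend (shprod (n + m) (z + t) s) b) a.
Proof.
rewrite /Bmul /extend; apply: eq_bigr => c _; rewrite mulrz_suml.
by apply: eq_bigr => d _; rewrite mulrC mulrzA.
Qed.

Lemma Baug_extend x (a : Bobj 0 x) : Baug a = extend (fun _ => 1) a.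
Proof. by apply: eq_bigr => c _; rewrite mulrzz mul1r. Qed.

Lemma BactE n x x' (le_xx' : (x <= x')%N) (a : Bobj n x) :
  Bact le_xx' a = extend (bas n x') a.
Proof. by []. Qed.

Lemma BdifE n x (a : Bobj n.+1 x) : Bdif a = extend (dcell n x) a.
Proof. by []. Qed.

(** * The DGA-morphisms f and g *)

Definition bar_proj_cell n x (s : seq nat) : Robj n x :=
  if is_cell n x s then Rgen n x *~ (if n == 0%N then 1 else (sumn s)%:Z) else 0.

Definition bar_proj n x : Bobj n x -> Robj n x := extend (bar_proj_cell n x).

Definition bar_incl n x : Robj n x -> Bobj n x :=
  fun r => bas n x (nseq n 1%N) *~ Rsum r.

Arguments bar_proj : clear implicits.
Arguments bar_incl : clear implicits.

HB.instance Definition _ n x :=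
  GRing.Additive.copy (@bar_proj n x) (extend (bar_proj_cell n x)).

Lemma bar_incl_is_zmod_morphism n x : zmod_morphism (bar_incl n x).
Proof. by move=> r r'; rewrite /bar_incl raddfB mulrzBr. Qed.

HB.instance Definition _ n x :=
  GRing.isZmodMorphism.Build _ _ (@bar_incl n x) (@bar_incl_is_zmod_morphism n x).

Lemma bar_proj_bas n x s : bar_proj n x (bas n x s) = bar_proj_cell n x s.
Proof. by apply: extend_basE => t; rewrite /bar_proj_cell => /negbTE ->. Qed.

Lemma bar_proj_act n x x' (le_xx' : (x <= x')%N) (a : Bobj n x) :
  bar_proj n x' (Bact le_xx' a) = Ract le_xx' (bar_proj n x a).
Proof.
rewrite BactE (extend_morph _ _ (raddfD (bar_proj n x'))).
rewrite [Ract _ _](extend_morph _ _ (raddfD (Ract le_xx'))).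
apply: eq_extend => s s_cell; rewrite /= bar_proj_bas /bar_proj_cell s_cell.
rewrite (is_cell_mono le_xx' s_cell).
have [Rx'|R0] := boolP (Rnonzero n x'); last exact: Robj_trivial.
by rewrite /Ract Rsum_genMz // (is_cell_Rnonzero s_cell Rx').
Qed.

Lemma bar_proj_dif n x (a : Bobj n.+1 x) : bar_proj n x (Bdif a) = 0.
Proof.
rewrite BdifE (extend_morph _ _ (raddfD (bar_proj n x))) -[RHS](extend0l a).
apply: eq_extend => s s_cell /=.
case: n a s s_cell => [|[|n]] a s s_cell; last exact: Robj_trivial.
- by case: s s_cell => [|k []] // _; rewrite dcell0 raddf0.
- case: s s_cell => [|a1 [|a2 []]] // s_cell.
  rewrite /dcell big_ord1 /= !raddfD !raddfMz /= !bar_proj_bas /bar_proj_cell /=.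
  move: s_cell; rewrite /is_cell /= => /andP[/and3P[a1_pos a2_pos _] sum_s].
  rewrite !ifT ?a1_pos ?a2_pos ?addn_gt0 ?a1_pos /= ?andbT; try lia.
  apply/ffunP=> c; rewrite !(ffunMzE, ffunE) !mulrzz expr1 expr2 !addn0; lia.
Qed.

Lemma bar_proj_shprod n m z t s u : is_cell n z s -> is_cell m t u ->
  bar_proj (n + m) (z + t) (shprod (n + m) (z + t) s u)
  = Rmul (bar_proj_cell n z s) (bar_proj_cell m t u).
Proof.
move=> s_cell u_cell; rewrite /Rmul /bar_proj_cell s_cell u_cell.
case: n m s u s_cell u_cell => [|[|n]] [|[|m]] s u s_cell u_cell; try exact: Robj_trivial.
- case: s u s_cell u_cell => [|? ?] [|? ?] // _ _.
  by rewrite shprod_nil_l bar_proj_bas /bar_proj_cell /= !Rsum_genMz.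
- case: s u s_cell u_cell => [|? ?] [|k []] // _ u_cell.
  rewrite shprod_nil_l bar_proj_bas /bar_proj_cell /= (is_cell_mono (leq_addl z t) u_cell).
  by rewrite !Rsum_genMz ?mul1r ?addn0 // /Rnonzero /=; move: u_cell; rewrite /is_cell /=; lia.
- case: s u s_cell u_cell => [|k []] [|? ?] // s_cell _.
  rewrite shprod_nil_r bar_proj_bas /bar_proj_cell /= (is_cell_mono (leq_addr t z) s_cell).
  by rewrite !Rsum_genMz ?mulr1 ?addn0 // /Rnonzero /=; move: s_cell; rewrite /is_cell /=; lia.
Qed.

Lemma bar_proj_mul n m z t (a : Bobj n z) (b : Bobj m t) :
  bar_proj (n + m) (z + t) (Bmul a b) = Rmul (bar_proj n z a) (bar_proj m t b).
Proof.
rewrite Bmul_extend (extend_morph _ _ (raddfD _)).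
rewrite [bar_proj n z a]/bar_proj (extend_morph _ _ (fun r r' => RmulDl r r' _)).
apply: eq_extend => s s_cell; rewrite /= (extend_morph _ _ (raddfD _)).
rewrite [bar_proj m t b]/bar_proj (extend_morph _ _ (RmulDr _)).
by apply: eq_extend => u u_cell; apply: bar_proj_shprod.
Qed.

Lemma bar_proj_unit : bar_proj 0 0 (bas 0 0 [::]) = Rgen 0 0.
Proof. by rewrite bar_proj_bas /bar_proj_cell /= mulr1z. Qed.

Lemma bar_proj_gen1 x (x_pos : (0 < x)%N) :
  bar_proj 1 x (bas 1 x [:: x]) = Ract x_pos w0 *~ x.
Proof.
rewrite bar_proj_bas /bar_proj_cell ifT; last by rewrite /is_cell /= x_pos addn0 leqnn.
by rewrite /= /Ract Rsum_gen // mulr1z addn0.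
Qed.

Lemma bar_proj_aug x (a : Bobj 0 x) : Raug (bar_proj 0 x a) = Baug a.
Proof.
rewrite /Raug (extend_morph _ _ (raddfD (@Rsum 0 x))) Baug_extend /=.
by apply: eq_extend => s s_cell; rewrite /bar_proj_cell s_cell Rsum_genMz.
Qed.

Lemma bar_incl_act n x x' (le_xx' : (x <= x')%N) (r : Robj n x) :
  bar_incl n x' (Ract le_xx' r) = Bact le_xx' (bar_incl n x r).
Proof.
rewrite BactE /bar_incl /Ract (raddfMz (extend (bas n x'))) /= extend_bas.
have [Rx|R0] := boolP (Rnonzero n x); last by rewrite !(Rsum_eq0 r R0) !mulr0z raddf0 mulr0z.
by rewrite is_cell_ones // Rsum_genMz // (Rnonzero_mono le_xx' Rx).
Qed.

Lemma bar_incl_dif n x (r : Robj n.+1 x) : bar_incl n x (Rdif r) = Bdif (bar_incl n.+1 x r).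
Proof.
rewrite /Rdif raddf0 BdifE /bar_incl raddfMz /= extend_bas.
case: n r => [|n] r; first by case: ifP => _; rewrite ?dcell0 mul0rz.
by rewrite Rsum_eq0 ?mulr0z.
Qed.

Lemma bar_incl_mul n m z t (r : Robj n z) (q : Robj m t) :
  bar_incl (n + m) (z + t) (Rmul r q) = Bmul (bar_incl n z r) (bar_incl m t q).
Proof.
rewrite Bmul_extend /bar_incl /Rmul (raddfMz (extend _)) /= extend_bas.
have [Rz|R0] := boolP (Rnonzero n z); last first.
  by rewrite (Rsum_eq0 r R0) !(mul0r, mulr0z, raddf0).
have [Rt|R0] := boolP (Rnonzero m t); last first.
  by rewrite (Rsum_eq0 q R0) !(mulr0, mulr0z, raddf0) if_same mul0rz.
rewrite is_cell_ones // (raddfMz (extend _)) /= extend_bas is_cell_ones //.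
move: Rz Rt; rewrite /Rnonzero.
case: n r => [|[|n]] r //=; case: m q => [|[|m]] q //= Rz Rt.
- by rewrite shprod_nil_l Rsum_genMz // -mulrzA mulrC.
- by rewrite shprod_nil_l Rsum_genMz /Rnonzero /=; [rewrite -mulrzA mulrC | lia].
- by rewrite shprod_nil_r Rsum_genMz /Rnonzero /=; [rewrite -mulrzA mulrC | lia].
- by rewrite shprod11 !mul0rz Rsum_eq0 // mulr0z.
Qed.

Lemma bar_incl_unit : bar_incl 0 0 (Rgen 0 0) = bas 0 0 [::].
Proof. by rewrite /bar_incl Rsum_gen // mulr1z. Qed.

Lemma bar_incl_aug x (r : Robj 0 x) : Baug (bar_incl 0 x r) = Raug r.
Proof. by rewrite Baug_extend /bar_incl raddfMz /= extend_bas /= mulrzz mul1r. Qed.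

Lemma bar_inclK n x : cancel (bar_incl n x) (bar_proj n x).
Proof.
move=> r; rewrite /bar_incl raddfMz /= bar_proj_bas /bar_proj_cell.
have [Rx|R0] := boolP (Rnonzero n x); last exact: Robj_trivial.
rewrite is_cell_ones // -[RHS]Rgen_Rsum -mulrzA; congr (_ *~ _).
by move: Rx; rewrite /Rnonzero; case: n r => [|[|n]] r; rewrite ?mul1r.
Qed.

(** * The homotopy *)

Definition bar_htpy_cell n x (s : seq nat) : Bobj n.+1 x :=
  if is_cell n x s then \sum_(1 <= j < head 0%N s) bas n.+1 x [:: 1%N, j & behead s]
  else 0.

Definition bar_htpy n x : Bobj n x -> Bobj n.+1 x := extend (bar_htpy_cell n x).

Arguments bar_htpy : clear implicits.

HB.instance Definition _ n x :=
  GRing.Additive.copy (@bar_htpy n x) (extend (bar_htpy_cell n x)).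

Lemma bar_htpy_bas n x s : bar_htpy n x (bas n x s) = bar_htpy_cell n x s.
Proof. by apply: extend_basE => t; rewrite /bar_htpy_cell => /negbTE ->. Qed.

Lemma bar_htpy_cell_cons n x a y : is_cell n x (a :: y) ->
  bar_htpy_cell n x (a :: y) = \sum_(1 <= j < a) bas n.+1 x [:: 1%N, j & y].
Proof. by rewrite /bar_htpy_cell => ->. Qed.

Lemma is_cell_htpy n x a y j : is_cell n x (a :: y) -> (1 <= j < a)%N ->
  is_cell n.+1 x [:: 1%N, j & y].
Proof.
rewrite /is_cell /= => /and3P[size_s /andP[a_pos y_pos] sum_s] j_lt_a.
by rewrite eqSS size_s y_pos andbT /=; apply/andP; split; lia.
Qed.

Lemma bar_htpy0 x (a : Bobj 0 x) : bar_htpy 0 x a = 0.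
Proof.
rewrite -[RHS](extend0l a); apply: eq_extend => s s_cell.
by rewrite /bar_htpy_cell s_cell; case: s s_cell => // _; rewrite big_geq.
Qed.

Lemma bar_htpy_act n x x' (le_xx' : (x <= x')%N) (a : Bobj n x) :
  bar_htpy n x' (Bact le_xx' a) = Bact le_xx' (bar_htpy n x a).
Proof.
rewrite !BactE (extend_morph _ _ (raddfD (bar_htpy n x'))).
rewrite [bar_htpy n x a]/bar_htpy (extend_morph _ _ (raddfD (extend (bas n.+1 x')))).
apply: eq_extend => s s_cell; rewrite /= bar_htpy_bas.
case: s s_cell => [|a1 y] s_cell; first by rewrite /bar_htpy_cell !big_geq ?if_same ?raddf0.
rewrite !bar_htpy_cell_cons ?(is_cell_mono le_xx' s_cell) // raddf_sum.
by apply: eq_big_nat => j j_lt; rewrite /= extend_bas (is_cell_htpy s_cell).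
Qed.

Lemma bar_htpy_incl n x (r : Robj n x) : bar_htpy n x (bar_incl n x r) = 0.
Proof.
rewrite /bar_incl raddfMz /= bar_htpy_bas /bar_htpy_cell.
by case: ifP => _; rewrite ?mul0rz // big_geq ?mul0rz //; case: n {r}.
Qed.

Lemma bar_proj_htpy n x (a : Bobj n x) : bar_proj n.+1 x (bar_htpy n x a) = 0.
Proof.
case: n a => [|n] a; last exact: Robj_trivial.
by rewrite bar_htpy0 raddf0.
Qed.

Lemma bar_htpyK n x (a : Bobj n x) : bar_htpy n.+1 x (bar_htpy n x a) = 0.
Proof.
rewrite [bar_htpy n x a]/bar_htpy (extend_morph _ _ (raddfD (bar_htpy n.+1 x))).
rewrite -[RHS](extend0l a); apply: eq_extend => s s_cell.
rewrite /= {1}/bar_htpy_cell s_cell raddf_sum big1 // => j _.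
by rewrite /= bar_htpy_bas /bar_htpy_cell /= big_geq // if_same.
Qed.

Lemma sumr_nat_split_shift (V : zmodType) (F : nat -> V) a b :
  (0 < a)%N -> (0 < b)%N ->
  \sum_(1 <= j < a + b) F j
  = \sum_(1 <= j < b) F j + F b + \sum_(1 <= j < a) F (j + b)%N.
Proof.
move=> a_pos b_pos; rewrite (big_cat_nat _ (n := b)) //=; last by lia.
rewrite (big_ltn (m := b)); last by lia.
by rewrite -[b.+1]add1n big_addn addnK addrA.
Qed.

Lemma extend_dcell_eq (V : zmodType) m x y (F G : seq nat -> V) :
  (forall t, is_cell m x t -> (sumn t <= sumn y)%N -> F t = G t) ->
  extend F (dcell m x y) = extend G (dcell m x y).
Proof.
move=> FG; rewrite /dcell !raddfD !raddfMz !raddf_sum /= !extend_bas.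
have FG' t : (sumn t <= sumn y)%N ->
    (if is_cell m x t then F t else 0) = (if is_cell m x t then G t else 0).
  by move=> le_ty; case: ifP => // t_cell; apply: FG.
rewrite FG' ?sumn_behead_le // (FG' (take m y)) ?sumn_take_le //.
congr (_ + _ + _); apply: eq_bigr => i _; rewrite !raddfMz /= !extend_bas FG' //.
by rewrite sumn_merge_at.
Qed.

(* Only for cells t of d y is [a|t] a cell whenever [a|y] is one. *)
Lemma bar_htpy_cons_dcell m x a y : is_cell m.+2 x (a :: y) ->
  bar_htpy m.+1 x (bar_cons a (dcell m x y))
  = \sum_(1 <= j < a) bar_cons 1 (bar_cons j (dcell m x y)).
Proof.
move=> ay_cell.
rewrite [bar_cons a _]/bar_cons (extend_morph _ _ (raddfD (bar_htpy m.+1 x))).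
under eq_bigr => j _ do
  rewrite [bar_cons j _]/bar_cons (extend_morph _ _ (raddfD (@bar_cons 1 m.+1 x))).
rewrite -extend_suml; apply: extend_dcell_eq => t t_cell le_ty.
rewrite /= bar_htpy_bas bar_htpy_cell_cons; last first.
  move: ay_cell t_cell; rewrite /is_cell /= => /and3P[_ /andP[a_pos _] sum_ay].
  by move=> /and3P[/eqP -> -> _]; rewrite eqxx a_pos /=; lia.
by apply: eq_big_nat => j _; rewrite /= bar_cons_bas.
Qed.

Lemma bar_htpy_formula0 x (a : Bobj 0 x) :
  Bdif (bar_htpy 0 x a) = bar_incl 0 x (bar_proj 0 x a) - a.
Proof.
rewrite bar_htpy0 raddf0 (extend_morph _ _ (raddfD (bar_incl 0 x))).
rewrite -[X in _ - X](extend_basK a) -extendBl -[LHS](extend0l a).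
apply: eq_extend => s s_cell; rewrite /bar_proj_cell s_cell /=.
by case: s s_cell => // s_cell; rewrite /bar_incl Rsum_genMz // mulr1z subrr.
Qed.

Lemma bar_htpy_formula_cell1 x k : is_cell 1 x [:: k] ->
  Bdif (bar_htpy_cell 1 x [:: k]) + bar_htpy 0 x (dcell 0 x [:: k])
  = bar_incl 1 x (bar_proj_cell 1 x [:: k]) - bas 1 x [:: k].
Proof.
move=> k_cell; have k_pos : (0 < k)%N by move: k_cell; rewrite is_cell_cons => /and3P[].
rewrite dcell0 raddf0 addr0 bar_htpy_cell_cons // raddf_sum.
have dif_term j : (1 <= j < k)%N ->
    Bdif (bas 2 x [:: 1%N; j]) = bas 1 x [:: 1%N] - (bas 1 x [:: j.+1] - bas 1 x [:: j]).
  move=> j_lt; rewrite BdifE extend_bas (is_cell_htpy k_cell j_lt) dcell_cons dcell0 raddf0.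
  by rewrite subr0 add1n /= opprB addrC addrA.
rewrite (eq_big_nat _ _ dif_term) sumrB sumr_const_nat telescope_sumr //.
have Rx : Rnonzero 1 x by move: k_cell; rewrite /is_cell /Rnonzero /=; lia.
rewrite /bar_incl /bar_proj_cell k_cell /= Rsum_genMz //.
case: k k_pos {k_cell dif_term} => // k _.
by rewrite subSS subn0 addn0 -pmulrn mulrS opprB addrA (addrC _ (bas 1 x [:: 1%N])).
Qed.

Lemma bar_htpy_formula_cell2 m x s1 s2 y : is_cell m.+2 x [:: s1, s2 & y] ->
  Bdif (bar_htpy_cell m.+2 x [:: s1, s2 & y])
    + bar_htpy m.+1 x (dcell m.+1 x [:: s1, s2 & y])
  = - bas m.+2 x [:: s1, s2 & y].
Proof.
move=> s_cell.
have [s1_pos s2_pos s2y_cell s12y_cell s1y_cell] : [/\ (0 < s1)%N, (0 < s2)%N,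
    is_cell m.+1 x (s2 :: y), is_cell m.+1 x ((s1 + s2)%N :: y) & is_cell m.+1 x (s1 :: y)].
  move: s_cell; rewrite /is_cell /= !eqSS => /and3P[size_y /and3P[s1_pos s2_pos y_pos] sum_s].
  by rewrite size_y s1_pos s2_pos y_pos addn_gt0 s1_pos /=; split=> //; lia.
set F := fun j => bas m.+2 x [:: 1%N, j & y].
set G := fun j => bas m.+2 x [:: j, s2 & y].
set W := fun j => bar_cons 1 (bar_cons j (dcell m x (s2 :: y))).
have dif_term j : (1 <= j < s1)%N ->
    Bdif (bas m.+3 x [:: 1%N, j, s2 & y]) = (G j - G j.+1) + (F (j + s2)%N + W j - F j).
  move=> j_lt; rewrite BdifE extend_bas (is_cell_htpy s_cell j_lt) !dcell_cons /=.
  rewrite !(raddfB (@bar_cons 1 m.+1 x), raddfD (@bar_cons 1 m.+1 x)) /= !bar_cons_bas.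
  by rewrite /F /G /W add1n !opprD !opprK !addrA addrK addrAC.
have htpy_dif : bar_htpy m.+1 x (dcell m.+1 x [:: s1, s2 & y])
    = \sum_(1 <= j < s2) F j - \sum_(1 <= j < s1 + s2) F j + \sum_(1 <= j < s1) F j
      - \sum_(1 <= j < s1) W j.
  rewrite dcell_cons /= !(raddfB (bar_htpy m.+1 x), raddfD (bar_htpy m.+1 x)) /=.
  by rewrite !bar_htpy_bas !bar_htpy_cell_cons // bar_htpy_cons_dcell.
rewrite bar_htpy_cell_cons // raddf_sum (eq_big_nat _ _ dif_term) htpy_dif big_split /=.
rewrite (@telescope_sumr_eq _ _ _ (fun j => - G j)) => [|//|j _]; last by rewrite opprK addrC.
rewrite sumrB big_split /= (sumr_nat_split_shift F s1_pos s2_pos).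
have -> : G 1%N = F s2 by [].
rewrite -/(G s1); clearbody F G W; apply/ffunP => c; rewrite !ffunE; ring.
Qed.

Lemma bar_htpy_formula_cell n x s : is_cell n.+1 x s ->
  Bdif (bar_htpy_cell n.+1 x s) + bar_htpy n x (dcell n x s)
  = bar_incl n.+1 x (bar_proj_cell n.+1 x s) - bas n.+1 x s.
Proof.
case: n s => [|m] [|s1 [|s2 y]] // s_cell; first exact: bar_htpy_formula_cell1.
by rewrite bar_htpy_formula_cell2 // /bar_incl Rsum_eq0 // mulr0z sub0r.
Qed.

Lemma bar_htpy_formula n x (a : Bobj n.+1 x) :
  Bdif (bar_htpy n.+1 x a) + bar_htpy n x (Bdif a) = bar_incl n.+1 x (bar_proj n.+1 x a) - a.
Proof.
rewrite [bar_htpy n.+1 x a]/bar_htpy (extend_morph _ _ (raddfD (@Bdif n.+1 x))).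
rewrite BdifE (extend_morph _ _ (raddfD (bar_htpy n x))) -extendDl.
rewrite (extend_morph _ _ (raddfD (bar_incl n.+1 x))) -[X in _ - X](extend_basK a) -extendBl.
exact: eq_extend (@bar_htpy_formula_cell n x).
Qed.

Lemma bar_proj_dga_morph : is_dga_morph (A := Bdga) (B := Rdga) bar_proj.
Proof.
split; first by split=> [n x|]; [apply: raddfD | exact: bar_proj_act].
split; first exact: bar_proj_dif.
split; first exact: bar_proj_mul.
by split; [exact: bar_proj_unit | exact: bar_proj_aug].
Qed.

Lemma bar_incl_dga_morph : is_dga_morph (A := Rdga) (B := Bdga) bar_incl.
Proof.
split; first by split=> [n x|]; [apply: raddfD | exact: bar_incl_act].
split; first exact: bar_incl_dif.
split; first exact: bar_incl_mul.
by split; [exact: bar_incl_unit | exact: bar_incl_aug].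
Qed.

Lemma bar_htpy_hmod_morph1 : is_hmod_morph1 (A := Bdga) (B := Bdga) bar_htpy.
Proof. by split=> [n x|]; [apply: raddfD | exact: bar_htpy_act]. Qed.

Theorem theorem7p10 :
  exists (f : forall n x, dobj Bdga n x -> dobj Rdga n x)
         (g : forall n x, dobj Rdga n x -> dobj Bdga n x)
         (Phi : forall n x, dobj Bdga n x -> dobj Bdga n.+1 x),
    [/\ is_dga_morph f, is_dga_morph g,
        (* values on generators: f[] = v0, f[x] = x ((x-1)_* w0), g v0 = [], g w0 = [1] *)
        f 0%N 0%N (bas 0 0 [::]) = v0 /\
        (forall x (hx : (0 < x)%N), f 1%N x (bas 1 x [:: x]) = dact hx w0 *~ x%:Z),
        g 0%N 0%N v0 = bas 0 0 [::] /\ g 1%N 1%N w0 = bas 1 1 [:: 1%N] &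
        [/\ (* f g = id *)
            forall n x (r : dobj Rdga n x), f n x (g n x r) = r,
            (* Phi is a degree +1 module map with d Phi + Phi d = g f - id *)
            is_hmod_morph1 Phi /\
            (forall x (a : dobj Bdga 0 x), ddif (Phi 0%N x a) = g 0%N x (f 0%N x a) - a) /\
            (forall n x (a : dobj Bdga n.+1 x),
               ddif (Phi n.+1 x a) + Phi n x (ddif a) = g n.+1 x (f n.+1 x a) - a),
            forall n x (r : dobj Rdga n x), Phi n x (g n x r) = 0,
            forall n x (a : dobj Bdga n x), f n.+1 x (Phi n x a) = 0 &
            forall n x (a : dobj Bdga n x), Phi n.+1 x (Phi n x a) = 0]].
Proof.
exists bar_proj, bar_incl, bar_htpy; split.
- exact: bar_proj_dga_morph.
- exact: bar_incl_dga_morph.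
- by split; [exact: bar_proj_unit | exact: bar_proj_gen1].
- by split; [exact: bar_incl_unit | rewrite /bar_incl Rsum_gen // mulr1z].
- split.
  + exact: bar_inclK.
  + split; first exact: bar_htpy_hmod_morph1.
    by split; [exact: bar_htpy_formula0 | exact: bar_htpy_formula].
  + exact: bar_htpy_incl.
  + exact: bar_proj_htpy.
  + exact: bar_htpyK.
Qed.
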